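(* Let $E$ be a $C$-pseudo-cone. Then $E$ is a $C$-asymptotic set if and only if $h_E(v)=0$ for all $v\in\partial\Omega_{C^\circ}$.
   Context: $C\subset\mathbb{R}^n$ ($n\ge2$) is a pointed closed convex cone with nonempty interior; $C^\circ$ its polar cone; $\partial\Omega_{C^\circ}=\mathbb{S}^{n-1}\cap\partial C^\circ$. A $C$-pseudo-cone is a nonempty closed convex set $E$ with $o\notin E$, $\lambda x\in E$ for all $x\in E,\lambda\ge1$, and recession cone equal to $C$. A $C$-asymptotic set is an unbounded closed convex set $\mathbb{A}\subset C$ with nonempty interior and $o\notin\mathbb{A}$ such that $\lim_{x\in\partial\mathbb{A},|x|\to\infty}d(x,\partial C)=0$. $h_E(v)=\sup_{x\in E}\langle x,v\rangle$. *)

(* R : realType, points of R^n are row vectors 'rV[R]_n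
   with the (product = Euclidean) topology of MathComp-Analysis. *)
From HB Require Import structures.
From mathcomp Require Import all_boot all_order all_algebra.
From mathcomp Require Import all_classical all_reals all_analysis.
Set Implicit Arguments. Unset Strict Implicit. Unset Printing Implicit Defensive.
Import Order.TTheory GRing.Theory Num.Theory.
Import numFieldNormedType.Exports.
Local Open Scope classical_set_scope.
Local Open Scope ring_scope.

Section Defs.
Variables (R : realType) (n : nat).
Local Notation V := 'rV[R]_n.

Definition dotp (x y : V) : R := \sum_(i < n) x ord0 i * y ord0 i.
Definition enorm (x : V) : R := Num.sqrt (dotp x x).

Definition origin : V := 0.

Definition convex_set_in (A : set V) : Prop :=
  forall x y t, A x -> A y -> 0 <= t <= 1 -> A ((1 - t) *: x + t *: y).

Definition boundary (A : set V) : set V := closure A `\` interior A.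

Definition unit_sphere : set V := [set x | enorm x = 1].

Definition is_cone (C : set V) : Prop :=
  C origin /\ forall x (l : R), C x -> 0 <= l -> C (l *: x).
Definition pointed (C : set V) : Prop :=
  forall x, C x -> C (- x) -> x = 0.
Definition pcc_cone (C : set V) : Prop :=
  is_cone C /\ convex_set_in C /\ closed C /\ pointed C /\ interior C !=set0.

Definition polar (C : set V) : set V := [set y | forall x, C x -> dotp x y <= 0].

(* \partial \Omega_{C^\circ} = S^{n-1} \cap \partial C^\circ *)
Definition Omega_bd (C : set V) : set V := unit_sphere `&` boundary (polar C).

Definition recession_cone (E : set V) : set V :=
  [set y | forall x (l : R), E x -> 0 <= l -> E (x + l *: y)].

Definition pseudo_cone (C E : set V) : Prop :=
  E !=set0 /\ closed E /\ convex_set_in E /\ ~ E origin /\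
  (forall x (l : R), E x -> 1 <= l -> E (l *: x)) /\
  recession_cone E = C.

Definition unbounded (A : set V) : Prop :=
  forall M : R, exists x, A x /\ M < enorm x.

Definition dist_to (x : V) (S : set V) : \bar R :=
  ereal_inf [set (enorm (x - y))%:E | y in S].

Definition asymptotic_set (C A : set V) : Prop :=
  unbounded A /\ closed A /\ convex_set_in A /\ A `<=` C /\
  interior A !=set0 /\ ~ A origin /\
  (forall e : R, 0 < e -> exists M : R, forall x,
      boundary A x -> M < enorm x -> (dist_to x (boundary C) < e%:E)%E).

Definition support_fun (E : set V) (v : V) : \bar R :=
  ereal_sup [set (dotp x v)%:E | x in E].

End Defs.

From HB Require Import structures.
From mathcomp Require Import all_boot all_order all_algebra.
From mathcomp Require Import all_classical all_reals all_analysis.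
From mathcomp Require Import ring lra.
Import Order.TTheory GRing.Theory Num.Theory.
Import numFieldNormedType.Exports.
Local Open Scope classical_set_scope.
Local Open Scope ring_scope.

(* Since E is contained in C, h_E <= 0 on the polar cone C°.

   If h_E(v) = -delta < 0 for a unit vector v on the boundary of C°, there are
   unit vectors u of C almost orthogonal to v.  The point t u lies outside E,
   while t u + rho0 a lies in E, where a is the center of a ball of radius r
   in C.  Between them sits a boundary point t u + rho a of E, and
   <. , v> <= -delta on E keeps rho bounded below.  Such points go to infinity
   while staying at distance >= rho r from the boundary of C, so E is not
   C-asymptotic.

   Conversely, if boundary points x_k of E go to infinity at distance >= e from
   the boundary of C, nearest-point projections give unit normals w_k in C°
   with <x_k, w_k> <= -e and h_E(w_k) <= <x_k, w_k> + e/2 <= -e/2.  As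
   <x_k/|x_k|, w_k> -> 0, a cluster point w of (w_k) lies on the sphere and on
   the boundary of C°, and h_E(w) <= -e/2. *)

Section EuclideanSpace.
Context {R : realType} {n : nat}.
Implicit Types (x y z w : 'rV[R]_n).

Lemma dotpC x y : dotp x y = dotp y x.
Proof. by apply: eq_bigr => i _; rewrite mulrC. Qed.

Lemma dotpDl x y z : dotp (x + y) z = dotp x z + dotp y z.
Proof. by rewrite /dotp -big_split; apply: eq_bigr => i _; rewrite mxE mulrDl. Qed.

Lemma dotpZl (a : R) x y : dotp (a *: x) y = a * dotp x y.
Proof. by rewrite /dotp mulr_sumr; apply: eq_bigr => i _; rewrite mxE mulrA. Qed.

Lemma dotpNl x y : dotp (- x) y = - dotp x y.
Proof. by rewrite -scaleN1r dotpZl mulN1r. Qed.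

Lemma dotpBl x y z : dotp (x - y) z = dotp x z - dotp y z.
Proof. by rewrite dotpDl dotpNl. Qed.

Lemma dotpDr x y z : dotp z (x + y) = dotp z x + dotp z y.
Proof. by rewrite dotpC dotpDl !(dotpC z). Qed.

Lemma dotpZr (a : R) x y : dotp y (a *: x) = a * dotp y x.
Proof. by rewrite dotpC dotpZl dotpC. Qed.

Lemma dotpNr x y : dotp y (- x) = - dotp y x.
Proof. by rewrite dotpC dotpNl dotpC. Qed.

Lemma dotpBr x y z : dotp z (x - y) = dotp z x - dotp z y.
Proof. by rewrite dotpDr dotpNr. Qed.

Lemma dotp0l y : dotp 0 y = 0.
Proof. by rewrite -(scale0r 0) dotpZl mul0r. Qed.

Lemma dotpxx_ge0 x : 0 <= dotp x x.
Proof. by apply: sumr_ge0 => i _; rewrite -expr2 sqr_ge0. Qed.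

Lemma dotpxx_eq0 x : dotp x x = 0 -> x = 0.
Proof.
move=> x0; apply/rowP => i; rewrite mxE.
have sq_ge0 (j : 'I_n) : predT j -> 0 <= x ord0 j * x ord0 j.
  by move=> _; rewrite -expr2 sqr_ge0.
by have /(_ i isT)/eqP := psumr_eq0P sq_ge0 x0; rewrite mulf_eq0 orbb => /eqP.
Qed.

Lemma enorm_ge0 x : 0 <= enorm x.
Proof. exact: sqrtr_ge0. Qed.

Lemma enorm_sqr x : enorm x ^+ 2 = dotp x x.
Proof. by rewrite sqr_sqrtr // dotpxx_ge0. Qed.

Lemma enormZ (a : R) x : enorm (a *: x) = `|a| * enorm x.
Proof. by rewrite /enorm dotpZl dotpZr mulrA -expr2 sqrtrM ?sqr_ge0 // sqrtr_sqr. Qed.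

Lemma enormN x : enorm (- x) = enorm x.
Proof. by rewrite -scaleN1r enormZ normrN normr1 mul1r. Qed.

Lemma enormBC x y : enorm (x - y) = enorm (y - x).
Proof. by rewrite -enormN opprB. Qed.

Lemma enorm0 : enorm (0 : 'rV[R]_n) = 0.
Proof. by rewrite /enorm dotp0l sqrtr0. Qed.

Lemma enorm_gt0 {x} : x != 0 -> 0 < enorm x.
Proof.
move=> x0; rewrite lt_neqAle enorm_ge0 andbT eq_sym; apply: contra x0 => /eqP ex0.
by apply/eqP/dotpxx_eq0; rewrite -enorm_sqr ex0 expr0n.
Qed.

Lemma enorm_normalize {x} : x != 0 -> enorm ((enorm x)^-1 *: x) = 1.
Proof.
by move=> x0; rewrite enormZ ger0_norm ?invr_ge0 ?enorm_ge0 // mulVf // gt_eqF ?enorm_gt0.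
Qed.

Lemma dotp_le_enorm x y : dotp x y <= enorm x * enorm y.
Proof.
have [-> | x0] := eqVneq x 0; first by rewrite dotp0l enorm0 mul0r.
have [-> | y0] := eqVneq y 0; first by rewrite dotpC dotp0l enorm0 mulr0.
have := dotpxx_ge0 (enorm y *: x - enorm x *: y).
rewrite !dotpBl !dotpBr !dotpZl !dotpZr -!enorm_sqr (dotpC y x).
have := mulr_gt0 (enorm_gt0 x0) (enorm_gt0 y0); nra.
Qed.

Lemma Nenorm_le_dotp x y : - (enorm x * enorm y) <= dotp x y.
Proof. by rewrite lerNl -dotpNl -(enormN x) dotp_le_enorm. Qed.

Lemma enormD x y : enorm (x + y) <= enorm x + enorm y.
Proof.
rewrite -[leRHS]ger0_norm ?addr_ge0 ?enorm_ge0 // -sqrtr_sqr ler_sqrt ?sqr_ge0 //.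
rewrite dotpDl !dotpDr (dotpC y x) sqrrD -!enorm_sqr.
have := dotp_le_enorm x y; nra.
Qed.

Lemma dotp_le_near y w (b : R) :
  (forall d, 0 < d -> exists w', enorm (w' - w) < d /\ dotp y w' <= b) ->
  dotp y w <= b.
Proof.
move=> near_w; apply/ler_addgt0Pr => d d0.
have y1 : 0 < enorm y + 1 by rewrite ltr_wpDl ?enorm_ge0.
have [w' [w'w yw']] := near_w _ (divr_gt0 d0 y1).
have -> : w = w' + (w - w') by rewrite addrC subrK.
rewrite dotpDr; have := dotp_le_enorm y (w - w'); rewrite enormBC.
have : enorm y * enorm (w' - w) <= enorm y * (d / (enorm y + 1)).
  by rewrite ler_wpM2l ?enorm_ge0 ?ltW.
have : enorm y * (d / (enorm y + 1)) <= d.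
  by rewrite mulrCA ger_pMr // ler_pdivrMr // mul1r lerDl.
lra.
Qed.

Lemma dotp_normalize_ge {x w} {m K : R} : 0 < m -> m <= enorm x -> 0 <= K ->
  - K <= dotp x w -> - (K / m) <= dotp ((enorm x)^-1 *: x) w.
Proof.
move=> m0 mx K0 Kx.
have ix : 0 <= (enorm x)^-1 by rewrite invr_ge0 enorm_ge0.
rewrite dotpZl; apply: le_trans (ler_wpM2l ix Kx).
by rewrite mulrN lerN2 mulrC ler_wpM2l // lef_pV2 ?posrE // (lt_le_trans m0).
Qed.

Lemma ler_dist_enorm x y : `|enorm x - enorm y| <= enorm (x - y).
Proof.
have := enormD (x - y) y; have := enormD (y - x) x.
by rewrite !subrK enormBC ler_norml; lra.
Qed.

Lemma enorm_coord x i : `|x ord0 i| <= enorm x.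
Proof.
rewrite -sqrtr_sqr ler_sqrt ?dotpxx_ge0 // /dotp (bigD1 i) //= -expr2 lerDl.
by apply: sumr_ge0 => j _; rewrite -expr2 sqr_ge0.
Qed.

Lemma mxnorm_coord x i : `|x ord0 i| <= `|x|.
Proof.
by rewrite [`|x|]mx_normrE; apply/bigmax_geP; right; exists (ord0, i).
Qed.

Lemma mxnorm_le_enorm x : `|x| <= enorm x.
Proof.
rewrite [`|x|]mx_normrE; apply/bigmax_leP; split; first exact: enorm_ge0.
by move=> [i j] _ /=; rewrite (ord1 i); exact: enorm_coord.
Qed.

Lemma enorm_le_mxnorm x : enorm x <= n%:R * `|x|.
Proof.
rewrite -[leRHS]ger0_norm ?mulr_ge0 // -sqrtr_sqr ler_sqrt ?sqr_ge0 //.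
apply: (@le_trans _ _ (n%:R * `|x| ^+ 2)).
  rewrite /dotp -[n in n%:R](card_ord n) -sumr_const mulr_suml.
  apply: ler_sum => i _; rewrite mul1r -expr2 -real_normK ?num_real //.
  by rewrite lerXn2r ?nnegrE // mxnorm_coord.
rewrite exprMn ler_wpM2r ?sqr_ge0 // -natrX ler_nat.
by case: (n) => // k; rewrite expnS leq_pmulr.
Qed.

End EuclideanSpace.

Section EuclideanTopology.
Context {R : realType} {n : nat}.
Implicit Types (x y z w : 'rV[R]_n) (A : set 'rV[R]_n).

(* The topology of ['rV[R]_n] is the one of the sup norm [`|x|], equivalent to [enorm]. *)
Lemma nbhs_enormP z A :
  nbhs z A <-> exists2 r : R, 0 < r & forall y, enorm (y - z) < r -> A y.
Proof.
split.
  move=> /nbhs_ballP[e e0 ze]; exists e => // y yz; apply: ze.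
  by rewrite -ball_normE /ball_ /= (le_lt_trans (mxnorm_le_enorm _)) // enormBC.
move=> [r r0 zr]; apply/nbhs_ballP.
have n1 : 0 < n.+1%:R :> R by rewrite ltr0n.
exists (r / n.+1%:R) => [|y]; first by rewrite /= divr_gt0.
rewrite -ball_normE /ball_ /= => yz; apply: zr.
rewrite enormBC (le_lt_trans (enorm_le_mxnorm _)) //.
apply: (@le_lt_trans _ _ (n%:R * (r / n.+1%:R))); first by rewrite ler_wpM2l // ltW.
by rewrite mulrCA gtr_pMr // ltr_pdivrMr // mul1r ltr_nat.
Qed.

Lemma closure_enormP z A :
  closure A z <-> forall r : R, 0 < r -> exists y, A y /\ enorm (y - z) < r.
Proof.
split=> [Az r r0 | Az B /nbhs_enormP[r r0 zB]].
  have : nbhs z [set y | enorm (y - z) < r] by apply/nbhs_enormP; exists r.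
  by move=> /Az[y]; exists y.
by have [y [Ay yz]] := Az r r0; exists y; split => //; exact: zB.
Qed.

Lemma closed_enorm z A :
  closed A -> (forall r : R, 0 < r -> exists y, A y /\ enorm (y - z) < r) -> A z.
Proof. by move=> /closure_id {2}->; move/closure_enormP. Qed.

Lemma not_interior_enorm {z A} {r : R} :
  ~ interior A z -> 0 < r -> exists y, enorm (y - z) < r /\ ~ A y.
Proof.
move=> Az r0; apply: contrapT => nAr; apply: Az; apply/nbhs_enormP; exists r => // y yz.
by apply: contrapT => nAy; apply: nAr; exists y.
Qed.

Lemma bounded_seq_cluster {y : nat -> 'rV[R]_n} {B : R} :
  (forall k, enorm (y k) <= B) ->
  exists q, forall e, 0 < e -> forall N, exists k, (N <= k)%N /\ enorm (y k - q) < e.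
Proof.
move=> yB; pose K := [set x : 'rV[R]_n | enorm x <= B].
have cK : compact K.
  apply: bounded_closed_compact.
    exists B; split; first exact: num_real.
    by move=> M BM x /= xB; rewrite (le_trans (mxnorm_le_enorm _)) // (le_trans xB) ?ltW.
  move=> z /closure_enormP zK; apply/ler_addgt0Pr => e e0.
  have [w [wB wz]] := zK e e0.
  have := enormD w (z - w); rewrite addrC subrK enormBC.
  by move: wB wz; rewrite /K /=; lra.
have [q [_ yq]] := cK (y @ \oo) _ (ex_intro2 _ _ 0%N I (fun k _ => yB k)).
exists q => e e0 N.
have yN : (y @ \oo) [set z | exists k, (N <= k)%N /\ z = y k].
  by exists N => // k kN; exists k.
have qe : nbhs q [set z | enorm (z - q) < e] by apply/nbhs_enormP; exists e.
by have [_ [[k [kN ->]] ykq]] := yq _ _ yN qe; exists k.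
Qed.

Lemma closed_boundary_mem {A x} : closed A -> boundary A x -> A x.
Proof. by move=> /closure_id {2}-> []. Qed.

Lemma boundary_on_segment {A x d} {T : R} :
  closed A -> 0 < T -> A x -> ~ A (x + T *: d) ->
  exists s, 0 <= s < T /\ boundary A (x + s *: d).
Proof.
move=> cA T0 Ax nAT.
have seg_diff (t s : R) : (x + t *: d) - (x + s *: d) = (t - s) *: d.
  by rewrite opprD addrACA subrr add0r scalerBl.
have d1 : 0 < enorm d + 1 by rewrite ltr_wpDl ?enorm_ge0.
pose S := [set t : R | 0 <= t <= T /\ A (x + t *: d)].
have S0 : S 0 by split; [rewrite lexx ltW | rewrite scale0r addr0].
have ST t : S t -> t <= T by case=> /andP[].
have supS : has_sup S by split; [exists 0 | exists T].
pose s := sup S.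
have le_s t : S t -> t <= s by move=> St; exact: (ub_le_sup supS.2 St).
have s0 : 0 <= s := le_s _ S0.
have sT : s <= T by apply: ge_sup; [exists 0 | ].
have As : A (x + s *: d).
  apply: closed_enorm => // r r0.
  have [t St st] := sup_adherent (divr_gt0 r0 d1) supS.
  exists (x + t *: d); split; first by case: St.
  rewrite seg_diff enormZ ler0_norm ?subr_le0 ?le_s // opprB.
  apply: (@le_lt_trans _ _ (r / (enorm d + 1) * enorm d)).
    by rewrite ler_wpM2r ?enorm_ge0 //; move: st; rewrite -/s; lra.
  by rewrite mulrAC ltr_pdivrMr // ltr_pM2l // ltrDl.
have sT' : s < T by rewrite lt_neqAle sT andbT; apply: contraPneq nAT => <-.
exists s; split; first by rewrite s0.
split; first exact: subset_closure.
move=> /nbhs_enormP[r r0 Ar].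
pose m := Num.min (T - s) (r / (enorm d + 1)).
have m0 : 0 < m by rewrite lt_min subr_gt0 sT' divr_gt0.
have mT : m <= T - s by rewrite ge_min lexx.
have mr : m * enorm d < r.
  have : m <= r / (enorm d + 1) by rewrite ge_min lexx orbT.
  move=> /(ler_wpM2r (enorm_ge0 d)) /le_lt_trans; apply.
  by rewrite mulrAC ltr_pdivrMr // ltr_pM2l // ltrDl.
suff /le_s : S (s + m / 2) by lra.
split; first by apply/andP; split; lra.
apply: Ar; rewrite seg_diff addrC addKr enormZ ger0_norm; last by lra.
have := enorm_ge0 d; nra.
Qed.

Lemma eventually_div_natS_lt (K : R) {eps : R} : 0 < eps ->
  exists N, forall k, (N <= k)%N -> K / k.+1%:R < eps.
Proof.
move=> eps0; exists (Num.truncn (K / eps)) => k Nk.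
rewrite ltr_pdivrMr ?ltr0Sn // mulrC -ltr_pdivrMr // (lt_le_trans (truncnS_gt _)) //.
by rewrite ler_nat ltnS.
Qed.

Lemma nearest_point {A} p : closed A -> A !=set0 ->
  exists2 q, A q & forall y, A y -> enorm (q - p) <= enorm (y - p).
Proof.
move=> cA [y0 Ay0].
pose D := [set enorm (y - p) | y in A].
have infD : has_inf D.
  split; first by exists (enorm (y0 - p)), y0.
  by exists 0 => _ [y _ <-]; exact: enorm_ge0.
pose m := inf D.
have m_le y : A y -> m <= enorm (y - p) by move=> Ay; apply: (ge_inf infD.2); exists y.
have m0 : 0 <= m by apply: (lb_le_inf infD.1) => _ [y _ <-]; exact: enorm_ge0.
have near_m k : exists y, A y /\ enorm (y - p) < m + k.+1%:R^-1.
  have k0 : 0 < k.+1%:R^-1 :> R by rewrite invr_gt0 ltr0Sn.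
  have [_ [y Ay <-] ym] := inf_adherent k0 infD.
  by exists y.
have [yk yk_min] := choice near_m.
clearbody m.
have yk_bd k : enorm (yk k) <= enorm p + m + 1.
  have [_ ykp] := yk_min k; have := enormD (yk k - p) p; rewrite subrK.
  have : k.+1%:R^-1 <= 1 :> R by rewrite invf_le1 ?ler1n ?ltr0n.
  by move: ykp; move: (k.+1%:R^-1 : R) => i; lra.
have [q ykq] := bounded_seq_cluster yk_bd.
exists q => [|y Ay].
  apply: closed_enorm => // r r0; have [k [_ ykr]] := ykq r r0 0%N.
  by exists (yk k); split => //; case: (yk_min k).
apply: le_trans (m_le _ Ay); apply/ler_addgt0Pr => e e0.
have e2 : 0 < e / 2 by rewrite divr_gt0.
have [N Ne] := eventually_div_natS_lt 1 e2.
have [k [Nk ykq_e]] := ykq _ e2 N.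
have := Ne _ Nk; rewrite div1r => ke.
have [_ ykp] := yk_min k; have := enormD (q - yk k) (yk k - p).
by rewrite addrA subrK (enormBC q (yk k)); move: ykq_e ykp ke; move: (k.+1%:R^-1 : R) => i; lra.
Qed.

Lemma le0_of_forall_le_mul {a b : R} :
  0 <= b -> (forall t, 0 < t <= 1 -> a <= t * b) -> a <= 0.
Proof.
move=> b0 le_ab; rewrite leNgt; apply/negP => a0.
have c0 : 0 < a + b + 1 by lra.
have /le_ab : 0 < a / (a + b + 1) <= 1 by rewrite divr_gt0 // ler_pdivrMr // mul1r; lra.
by rewrite mulrAC ler_pdivlMr //; nra.
Qed.

Lemma nearest_point_dotp {A p q y} : convex_set_in A -> A q ->
  (forall y, A y -> enorm (q - p) <= enorm (y - p)) ->
  A y -> dotp (y - q) (p - q) <= 0.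
Proof.
move=> cvA Aq q_min Ay.
apply: (le0_of_forall_le_mul (dotpxx_ge0 (y - q))) => t /andP[t0 t1].
have /q_min : A ((1 - t) *: q + t *: y) by apply: cvA => //; rewrite ltW.
have -> : (1 - t) *: q + t *: y - p = t *: (y - q) - (p - q).
  by apply/rowP => i; rewrite !mxE; ring.
rewrite -[q - p]opprB enormN => qp.
have : enorm (p - q) ^+ 2 <= enorm (t *: (y - q) - (p - q)) ^+ 2.
  by rewrite lerXn2r ?nnegrE ?enorm_ge0.
rewrite !enorm_sqr; move: (y - q) (p - q) => u g.
rewrite dotpBl !dotpBr !dotpZl !dotpZr (dotpC g u) => ug.
by have := dotpxx_ge0 u; rewrite -(ler_pM2l t0); nra.
Qed.

Lemma boundary_near_normal {A x} {eta : R} :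
  closed A -> convex_set_in A -> boundary A x -> 0 < eta ->
  exists w, enorm w = 1 /\ forall y, A y -> dotp y w <= dotp x w + eta.
Proof.
move=> cA cvA Ax eta0.
have [p [px nAp]] := not_interior_enorm Ax.2 eta0.
have [q Aq q_min] := nearest_point p cA (ex_intro _ x (closed_boundary_mem cA Ax)).
have pq : p - q != 0 by rewrite subr_eq0; apply: contraPneq nAp => ->.
pose w := (enorm (p - q))^-1 *: (p - q).
have w1 : enorm w = 1 := enorm_normalize pq.
exists w; split => // y Ay.
have yp : dotp (y - p) w <= 0.
  have -> : y - p = (y - q) - (p - q) by rewrite opprB addrA subrK.
  rewrite dotpZr pmulr_rle0 ?invr_gt0 ?enorm_gt0 // dotpBl.
  by have := nearest_point_dotp cvA Aq q_min Ay; have := dotpxx_ge0 (p - q); lra.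
have := dotp_le_enorm (p - x) w; rewrite w1 mulr1.
by move: yp px; rewrite !dotpBl; lra.
Qed.

End EuclideanTopology.

Section Cones.
Context {R : realType} {n : nat}.
Implicit Types (x y z v w c : 'rV[R]_n) (A C : set 'rV[R]_n).

Lemma recession_dotp_le0 {A w c} {b : R} : A !=set0 ->
  (forall y, A y -> dotp y w <= b) -> recession_cone A c -> dotp c w <= 0.
Proof.
move=> [y0 Ay0] Ab recc; rewrite leNgt; apply/negP => cw.
pose l := (b - dotp y0 w + 1) / dotp c w.
have y0b := Ab _ Ay0.
have l0 : 0 <= l by rewrite divr_ge0 ?ltW //; lra.
by have := Ab _ (recc _ _ Ay0 l0); rewrite dotpDl dotpZl mulfVK ?gt_eqF //; lra.
Qed.

Lemma dist_to_ge {A z} {r : R} : 0 < r ->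
  (forall y, enorm (y - z) < r -> A y) -> (r%:E <= dist_to z (boundary A))%E.
Proof.
move=> r0 zA; apply/ereal_infP => _ [b [_ nAb] <-]; rewrite lee_fin leNgt.
apply/negP => zb; apply: nAb; apply/nbhs_enormP.
exists (r - enorm (z - b)); first by rewrite subr_gt0.
move=> y yb; apply: zA; have := enormD (y - b) (b - z).
by rewrite addrA subrK (enormBC b z); lra.
Qed.

Lemma polar_closure C v : closure (polar C) v -> polar C v.
Proof.
move=> /closure_enormP Cv c Cc; apply: dotp_le_near => d d0.
by have [w [Cw wv]] := Cv d d0; exists w; split => //; exact: Cw.
Qed.

Lemma cone_addr {C x y} : is_cone C -> convex_set_in C -> C x -> C y -> C (x + y).
Proof.
move=> [_ Cs] Ccv Cx Cy.
have : C ((1 - 2^-1) *: x + 2^-1 *: y).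
  by apply: Ccv => //; rewrite invr_ge0 invf_le1 ?ler0n ?ler1n.
move=> /(Cs _ 2) /(_ (ler0n _ 2)).
by rewrite (_ : 1 - 2^-1 = 2^-1 :> R) ?scalerDr ?scalerA ?mulfV ?scale1r //; field.
Qed.

Lemma cone_ball_shift {C a c} {r rho : R} : is_cone C -> convex_set_in C ->
  (forall y, enorm (y - a) < r -> C y) -> C c -> 0 < rho ->
  forall y, enorm (y - (c + rho *: a)) < rho * r -> C y.
Proof.
move=> Cc Ccv Car Cc' rho0 y yr.
have : C (a + rho^-1 *: (y - (c + rho *: a))).
  apply: Car; rewrite addrAC subrr add0r enormZ ger0_norm ?invr_ge0 ?ltW //.
  by rewrite mulrC ltr_pdivrMr // mulrC.
move=> /(Cc.2 _ rho) /(_ (ltW rho0)) /(cone_addr Cc Ccv Cc').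
by rewrite scalerDr scalerA mulfV ?gt_eqF // scale1r addrA [_ + (y - _)]addrC subrK.
Qed.

Lemma polar_not_interiorP {C w} : is_cone C ->
  ~ interior (polar C) w <->
  forall eps : R, 0 < eps -> exists u, [/\ C u, enorm u = 1 & - eps < dotp u w].
Proof.
move=> [_ Cs]; split => [Cw eps eps0 | near_w /nbhs_enormP[r r0 Cr]].
  have [w' [w'w /existsNP[c /not_implyP[Cc /negP]]]] := not_interior_enorm Cw eps0.
  rewrite -ltNge => cw'.
  have c0 : c != 0 by apply: contraTneq cw' => ->; rewrite dotp0l ltxx.
  exists ((enorm c)^-1 *: c); split.
  - by apply: Cs; rewrite // invr_ge0 enorm_ge0.
  - exact: enorm_normalize.
  have -> : w = w' + (w - w') by rewrite addrC subrK.
  rewrite dotpDr dotpZl; have := Nenorm_le_dotp ((enorm c)^-1 *: c) (w - w').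
  rewrite enorm_normalize // mul1r enormBC.
  have ic : 0 < (enorm c)^-1 by rewrite invr_gt0 enorm_gt0.
  by have := mulr_gt0 ic cw'; lra.
have [u [Cu u1 uw]] := near_w _ (divr_gt0 r0 (ltr0Sn R 1)).
have /(_ _ Cu) : polar C (w + (r / 2) *: u).
  apply: Cr; rewrite addrAC subrr add0r enormZ u1 mulr1 ger0_norm ?divr_ge0 ?ltW //.
  by rewrite ltr_pdivrMr // ltr_pMr // ltr1n.
rewrite dotpDr dotpZr -enorm_sqr u1 expr1n mulr1.
by move: uw; lra.
Qed.

Lemma polar_dotp_le_dist {C x w} {e : R} : closed C -> C x -> polar C w -> enorm w = 1 ->
  (e%:E <= dist_to x (boundary C))%E -> dotp x w <= - e.
Proof.
move=> Ccl Cx Cw w1 ex.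
have ww : dotp w w = 1 by rewrite -enorm_sqr w1 expr1n.
have xw := Cw _ Cx.
have T0 : 0 < 1 - dotp x w by lra.
have nCT : ~ C (x + (1 - dotp x w) *: w) by move/Cw; rewrite dotpDl dotpZl ww; lra.
have [s [/andP[s0 _] Cs]] := boundary_on_segment Ccl T0 Cx nCT.
have := Cw _ (closed_boundary_mem Ccl Cs); rewrite dotpDl dotpZl ww mulr1.
have : (dist_to x (boundary C) <= (enorm (x - (x + s *: w)))%:E)%E.
  by apply: ereal_inf_lbound; exists (x + s *: w).
move=> /(le_trans ex); rewrite lee_fin opprD addrA subrr add0r enormN enormZ w1 mulr1.
by rewrite ger0_norm //; lra.
Qed.

End Cones.

Section PseudoCones.
Context {R : realType} {n : nat}.
Variables (C E : set 'rV[R]_n).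
Hypotheses (hC : pcc_cone C) (hE : pseudo_cone C E).

Lemma pseudo_cone_addr {y c} : E y -> C c -> E (y + c).
Proof.
case: hE => _ [_ [_ [_ [_ recE]]]] Ey; rewrite -recE => /(_ y 1 Ey ler01).
by rewrite scale1r.
Qed.

Lemma pseudo_cone_sub : E `<=` C.
Proof.
case: hE => _ [cE [cvE [_ [Esc recE]]]] x Ex; rewrite -recE => x0 l Ex0 l0.
(* [x0 + l x] is the limit of [(1 - l / lam) x0 + (l / lam) (lam x)] as [lam] grows. *)
apply: closed_enorm => // r r0.
pose K := enorm x0 + 1.
have K0 : 0 < K by rewrite ltr_wpDl ?enorm_ge0.
have lKr : 0 <= l * K / r by rewrite divr_ge0 ?mulr_ge0 // ltW.
pose lam := 1 + l + l * K / r.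
have lam1 : 1 <= lam by rewrite /lam; lra.
have lam_r : r * lam = r + r * l + l * K by rewrite /lam; field; rewrite gt_eqF.
pose th := l / lam.
have th0 : 0 <= th by rewrite divr_ge0 // (le_trans ler01).
have th1 : th <= 1 by rewrite ler_pdivrMr ?(lt_le_trans ltr01) // mul1r /lam; lra.
exists ((1 - th) *: x0 + th *: (lam *: x)); split.
  by apply: cvE => //; [exact: Esc | rewrite th0 th1].
have -> : (1 - th) *: x0 + th *: (lam *: x) - (x0 + l *: x) = - (th *: x0).
  rewrite scalerA /th mulfVK ?gt_eqF ?(lt_le_trans ltr01) //.
  by apply/rowP => i; rewrite !mxE; ring.
rewrite enormN enormZ ger0_norm //.
apply: (@le_lt_trans _ _ (th * K)); first by rewrite ler_wpM2l // lerDl.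
rewrite /th mulrAC ltr_pdivrMr ?(lt_le_trans ltr01) // lam_r.
by have := mulr_ge0 (ltW r0) l0; lra.
Qed.

Lemma pseudo_cone_interior_shift {a} {r : R} : 0 < r ->
  (forall y, enorm (y - a) < r -> C y) ->
  exists2 rho : R, 0 < rho & forall c, C c -> E (c + rho *: a).
Proof.
case: hC => Cc [Ccv _]; case: hE => [[y0 Ey0] _] r0 Car.
pose rho := (enorm y0 + 1) / r.
have rho0 : 0 < rho by rewrite divr_gt0 ?ltr_wpDl ?enorm_ge0.
exists rho => // c Cc'.
have : C (rho *: a - y0).
  apply: (cone_ball_shift Cc Ccv Car (Cc.1 : C 0) rho0).
  by rewrite add0r addrAC subrr add0r enormN /rho divfK ?gt_eqF // ltrDl.
move=> /(cone_addr Cc Ccv Cc') /(pseudo_cone_addr Ey0).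
by rewrite addrCA [y0 + _]addrC subrK.
Qed.

Lemma pseudo_cone_far_boundary {v} {delta : R} :
  enorm v = 1 -> ~ interior (polar C) v -> 0 < delta ->
  (forall y, E y -> dotp y v <= - delta) ->
  exists2 e : R, 0 < e & forall M : R,
    exists z, [/\ boundary E z, M < enorm z & (e%:E <= dist_to z (boundary C))%E].
Proof.
move=> v1 Cv delta0 Ev.
case: hC => Cc [Ccv [_ [_ [a /nbhs_enormP[r r0 Car]]]]]; case: hE => _ [cE _].
have [rho0 rho00 E_shift] := pseudo_cone_interior_shift r0 Car.
have a0 := enorm_ge0 a.
pose e := delta * r / (2 * (enorm a + 1)).
exists e => [|M]; first by rewrite divr_gt0 ?mulr_gt0 //; lra.
pose t := `|M| + rho0 * enorm a + 1.
have t0 : 0 < t by rewrite /t; have := mulr_ge0 (ltW rho00) a0; have := normr_ge0 M; lra.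
have [|u [Cu u1 uv]] := (polar_not_interiorP Cc).1 Cv (delta / (2 * t)).
  by rewrite divr_gt0 ?mulr_gt0.
have Ctu : C (t *: u) by apply: Cc.2 => //; exact: ltW.
have tuv : - (delta / 2) < dotp (t *: u) v.
  rewrite dotpZl (_ : delta / 2 = t * (delta / (2 * t))); last by field; rewrite gt_eqF.
  by rewrite -mulrN ltr_pM2l.
have nEtu : ~ E (t *: u + rho0 *: a + rho0 *: - a).
  by rewrite scalerN addrK => /Ev; lra.
have [s [/andP[s0 s_rho0]]] := boundary_on_segment cE rho00 (E_shift _ Ctu) nEtu.
have -> : t *: u + rho0 *: a + s *: - a = t *: u + (rho0 - s) *: a.
  by rewrite scalerN scalerBl addrA.
have rho_le : rho0 - s <= rho0 by rewrite lerBlDr lerDl.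
move: s_rho0 rho_le; rewrite -subr_gt0; move: (rho0 - s) => rho rho_pos rho_le bz.
have e_rho : e <= rho * r.
  have zv := Ev _ (closed_boundary_mem cE bz); rewrite dotpDl (dotpZl rho) in zv.
  have av := Nenorm_le_dotp a v; rewrite v1 mulr1 in av.
  have : delta / 2 <= rho * (enorm a + 1) by nra.
  by move=> h; rewrite /e mulrAC ler_pM2r // ler_pdivrMr ?mulr_gt0 //; lra.
exists (t *: u + rho *: a); split => //.
  have := enormD (t *: u + rho *: a) (- (rho *: a)).
  rewrite addrK enormN !enormZ u1 mulr1 (ger0_norm (ltW t0)) (ger0_norm (ltW rho_pos)).
  have := ler_wpM2r a0 rho_le; have := ler_norm M; rewrite /t; lra.
apply: (le_trans _ (dist_to_ge (mulr_gt0 rho_pos r0) (cone_ball_shift Cc Ccv Car Ctu rho_pos))).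
by rewrite lee_fin.
Qed.

Lemma pseudo_cone_boundary_normal {x} {e : R} : boundary E x -> 0 < e ->
  (e%:E <= dist_to x (boundary C))%E ->
  exists w, [/\ enorm w = 1, polar C w, dotp x w <= - e
              & forall y, E y -> dotp y w <= dotp x w + e / 2].
Proof.
case: hE => E0 [cE [cvE [_ [_ recE]]]] bx e0 ex.
have [w [w1 Ew]] := boundary_near_normal cE cvE bx (divr_gt0 e0 (ltr0Sn R 1)).
have Cw : polar C w by move=> c; rewrite -recE; exact: recession_dotp_le0 E0 Ew.
exists w; split => //; case: hC => _ [_ [cC _]].
exact: polar_dotp_le_dist cC (pseudo_cone_sub _ (closed_boundary_mem cE bx)) Cw w1 ex.
Qed.

Lemma pseudo_cone_far_normals {e : R} : 0 < e ->
  (forall M : R, exists x,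
     [/\ boundary E x, M < enorm x & (e%:E <= dist_to x (boundary C))%E]) ->
  exists K : R, forall k : nat, exists uw : 'rV[R]_n * 'rV[R]_n,
    [/\ C uw.1 /\ enorm uw.1 = 1, enorm uw.2 = 1, polar C uw.2,
        forall y, E y -> dotp y uw.2 <= - (e / 2) & - (K / k.+1%:R) <= dotp uw.1 uw.2].
Proof.
move=> e0 far; case: hE => [[y0 Ey0] [cE _]]; case: hC => Cc _.
exists (enorm y0 + e / 2) => k.
have [x [bx kx ex]] := far k.+1%:R.
have [w [w1 Cw xw Ew]] := pseudo_cone_boundary_normal bx e0 ex.
have x0 : 0 < enorm x := lt_trans (ltr0Sn R k) kx.
exists ((enorm x)^-1 *: x, w); split => //=.
- split; last first.
    by rewrite enorm_normalize //; apply: contraTneq x0 => ->; rewrite enorm0 ltxx.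
  apply: Cc.2; last by rewrite invr_ge0 ltW.
  exact: pseudo_cone_sub (closed_boundary_mem cE bx).
- by move=> y Ey; have := Ew _ Ey; lra.
apply: dotp_normalize_ge (ltr0Sn R k) (ltW kx) _ _.
  by rewrite addr_ge0 ?enorm_ge0 ?divr_ge0 ?ltW.
by have := Ew _ Ey0; have := Nenorm_le_dotp y0 w; rewrite w1 mulr1; lra.
Qed.

Lemma pseudo_cone_far_support {e : R} : 0 < e ->
  (forall M : R, exists x,
     [/\ boundary E x, M < enorm x & (e%:E <= dist_to x (boundary C))%E]) ->
  exists2 w, Omega_bd C w & forall y, E y -> dotp y w <= - (e / 2).
Proof.
move=> e0 /(pseudo_cone_far_normals e0)[K far_normal]; case: hC => Cc _.
have [uw uw_spec] := choice far_normal.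
have uw_bd k : enorm (uw k).2 <= 1 by case: (uw_spec k) => _ ->.
have [w uw_w] := bounded_seq_cluster (y := fun k => (uw k).2) uw_bd.
have w1 : enorm w = 1.
  apply/eqP; rewrite -subr_eq0 -normr_le0; apply/ler_addgt0Pr => d d0; rewrite add0r.
  have [k [_ wkd]] := uw_w d d0 0%N; have [_ <- _ _ _] := uw_spec k.
  by rewrite (le_trans (ler_dist_enorm _ _)) // enormBC ltW.
have Cw : polar C w.
  move=> c Cc'; apply: dotp_le_near => d d0; have [k [_ wkd]] := uw_w d d0 0%N.
  by exists (uw k).2; split => //; case: (uw_spec k) => _ _ /(_ c Cc').
have Cw_int : ~ interior (polar C) w.
  apply/(polar_not_interiorP Cc) => eps eps0.
  have eps2 : 0 < eps / 2 by rewrite divr_gt0.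
  have [N NK] := eventually_div_natS_lt K eps2.
  have [k [Nk wkw]] := uw_w _ eps2 N.
  have [[Cu u1] _ _ _ uwk] := uw_spec k.
  exists (uw k).1; split => //.
  have -> : w = (uw k).2 + (w - (uw k).2) by rewrite addrC subrK.
  rewrite dotpDr; have := Nenorm_le_dotp (uw k).1 (w - (uw k).2).
  rewrite u1 mul1r enormBC; have := NK _ Nk.
  by move: uwk; move: (K / k.+1%:R) => Kk; lra.
exists w; first by split; [exact: w1 | split; [exact: subset_closure | ]].
move=> y Ey; apply: dotp_le_near => d d0; have [k [_ wkd]] := uw_w d d0 0%N.
by exists (uw k).2; split => //; case: (uw_spec k) => _ _ _ /(_ y Ey).
Qed.

Lemma pseudo_cone_unbounded : unbounded E.
Proof.
case: hE => [[y Ey] [_ [_ [nE0 [Esc _]]]]] M.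
have y0 : 0 < enorm y by apply: enorm_gt0; apply/eqP => y0; apply: nE0; rewrite /origin -y0.
exists ((1 + `|M| / enorm y) *: y); split.
  by apply: Esc => //; rewrite lerDl divr_ge0 // ltW.
rewrite enormZ ger0_norm; last by rewrite addr_ge0 // divr_ge0 // ltW.
by rewrite mulrDl mul1r mulfVK ?gt_eqF //; have := ler_norm M; lra.
Qed.

Lemma pseudo_cone_interior_neq0 : interior E !=set0.
Proof.
case: hC => _ [_ [_ [_ [a /nbhs_enormP[r r0 Car]]]]].
have [rho _ E_shift] := pseudo_cone_interior_shift r0 Car.
exists (a + rho *: a); apply/nbhs_enormP; exists r => // y ya.
rewrite -(subrK (rho *: a) y); apply/E_shift/Car.
by rewrite -addrA -opprD [rho *: a + a]addrC.
Qed.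

Lemma support_fun_Omega_bd v : asymptotic_set C E -> Omega_bd C v -> support_fun E v = 0%E.
Proof.
move=> [_ [_ [_ [_ [_ [_ lim]]]]]] [v1 [/polar_closure Cv Cv_int]].
have ub y : E y -> ((dotp y v)%:E <= support_fun E v)%E.
  by move=> Ey; apply: ereal_sup_ubound; exists y.
have le0 : (support_fun E v <= 0)%E.
  by apply: ge_ereal_sup => _ [y Ey <-]; rewrite lee_fin; exact: Cv _ (pseudo_cone_sub _ Ey).
apply/eqP; rewrite eq_le le0 /= leNgt; apply/negP => lt0.
have [delta delta0 Ev] : exists2 delta : R, 0 < delta & forall y, E y -> dotp y v <= - delta.
  move: lt0 ub; case: (support_fun E v) => [s | | ] //= s0 ub.
    by exists (- s) => [|y /ub]; rewrite ?oppr_gt0 -?lte_fin // opprK lee_fin.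
  by exists 1 => // y /ub; rewrite leeNy_eq.
have [e e0 far] := pseudo_cone_far_boundary v1 Cv_int delta0 Ev.
have [M Mlim] := lim e e0; have [z [bz Mz ez]] := far M.
by have := lt_le_trans (Mlim z bz Mz) ez; rewrite ltxx.
Qed.

Lemma asymptotic_of_support_fun :
  (forall v, Omega_bd C v -> support_fun E v = 0%E) -> asymptotic_set C E.
Proof.
move=> h0; case: (hE) => _ [cE [cvE [nE0 _]]].
split; first exact: pseudo_cone_unbounded.
do 3 (split => //); first exact: pseudo_cone_sub.
split; first exact: pseudo_cone_interior_neq0.
split => // e e0; apply: contrapT => nlim.
have far M : exists x, [/\ boundary E x, M < enorm x & (e%:E <= dist_to x (boundary C))%E].
  apply: contrapT => nfar; apply: nlim; exists M => x bx Mx.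
  by rewrite ltNge; apply/negP => ex; apply: nfar; exists x.
have [w Cw Ew] := pseudo_cone_far_support e0 far.
have : (support_fun E w <= (- (e / 2))%:E)%E.
  by apply: ge_ereal_sup => _ [y Ey <-]; rewrite lee_fin; exact: Ew.
by rewrite h0 // lee_fin oppr_ge0 leNgt divr_gt0.
Qed.

End PseudoCones.

Theorem corollary3p1 (R : realType) (n : nat) (C E : set 'rV[R]_n) :
  (2 <= n)%N -> pcc_cone C -> pseudo_cone C E ->
  (asymptotic_set C E <->
   (forall v, Omega_bd C v -> support_fun E v = 0%E)).
Proof.
move=> _ hC hE; split => [asE v | ]; first exact: support_fun_Omega_bd.
exact: asymptotic_of_support_fun.
Qed.
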